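(* Let $W\in C(\overline\Omega)$, let $\Upsilon$ be a compact jet tube, and let $\mathcal Q\subset\overline\Omega\times\mathbb S_{++}(n)$. Then, for every $\epsilon>0$, \[ \mathfrak C^-_{\mathcal Q}(W)\le\omega_F\big(\mathfrak r^-_{\mathcal Q}(W)\big)+\epsilon,\qquad \mathfrak C^+_{\mathcal Q}(W)\le\omega_F\big(\mathfrak r^+_{\mathcal Q}(W)\big)+\epsilon, \] where the coverage radii $\mathfrak r^\pm_{\mathcal Q}(W)$ are defined with this $\epsilon$.
   Context: Let $\Omega\subset\mathbb{R}^n$ be bounded open, $U\subset\mathbb{R}^m$ compact, $\beta\ge0$, and $f,\Sigma,\ell$ continuous on $\overline\Omega\times U$ (values in $\mathbb{R}^n$, $\mathbb{R}^{n\times n}$, $\mathbb{R}$); $a=\Sigma\Sigma^\top$; $F(x,r,p,A)=\beta r-\inf_{c\in U}\{\ell(x,c)+p^\top f(x,c)+\tfrac12\operatorname{tr}(a(x,c)A)\}$, a continuous function. $\mathbb S(n)$, $\mathbb S_{++}(n)$: symmetric and positive definite symmetric matrices. Jet tube: $\Upsilon\subset\overline\Omega\times\mathbb{R}\times\mathbb{R}^n\times\mathbb S(n)$ compact. For $Y=(\zeta,r,p,A)$, $\hat Y=(\hat\zeta,\hat r,\hat p,\hat A)$ let $d(Y,\hat Y)=|\zeta-\hat\zeta|+|r-\hat r|+\|p-\hat p\|+\|A-\hat A\|_F$. Let $\omega_F$ be a nondecreasing right-continuous modulus with $|F(Y)-F(\hat Y)|\le\omega_F(d(Y,\hat Y))$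 for all $Y,\hat Y\in\Upsilon$, and $\omega_F(+\infty)=+\infty$. Jets: for $\zeta\in\Omega$, $J^{2,-}W(\zeta)$ (resp. $J^{2,+}W(\zeta)$) is the set of $(p,A)\in\mathbb{R}^n\times\mathbb S(n)$ with $W(y)\ge$ (resp. $\le$) $W(\zeta)+p\cdot(y-\zeta)+\tfrac12(y-\zeta)^\top A(y-\zeta)+o(\|y-\zeta\|^2)$ as $y\to\zeta$. Full families: $\mathfrak J^\mp(W)=\{(\zeta,W(\zeta),p,A):\zeta\in\Omega,(p,A)\in J^{2,\mp}W(\zeta)\}$, keeping only data lying in $\Upsilon$. Envelope families: for $(x,M)\in\mathcal Q$ fix a selection $\zeta_x\in\arg\min_{\zeta\in\overline\Omega}\{W(\zeta)+\tfrac12(x-\zeta)^\top M(x-\zeta)\}$ and $\zeta^\star_x\in\arg\max_{\zeta\in\overline\Omega}\{W(\zeta)-\tfrac12(x-\zeta)^\top M(x-\zeta)\}$; $\mathfrak S^-_{\mathcal Q}(W)=\{(\zeta_x,W(\zeta_x),M(x-\zeta_x),-M):(x,M)\in\mathcal Q,\zeta_x\in\Omega\}$ and $\mathfrak S^+_{\mathcal Q}(W)=\{(\zeta^\star_x,W(\zeta^\star_x),-M(x-\zeta^\star_x),M):(x,M)\in\mathcal Q,\zeta^\star_x\in\Omega\}$, again keeping only data lying in $\Upsilon$. Residuals (with $\sup\emptyset=0$): $\mathfrak R^-_{\rm CL}(W)=\sup_{Y\in\mathfrak J^-(W)}\max\{-F(Y),0\}$, $\mathfrak R^+_{\rm CL}(W)=\sup_{Y\in\mathfrak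 J^+(W)}\max\{F(Y),0\}$, and $\mathfrak R^\mp_{\mathcal Q}(W)$ the same suprema over $\mathfrak S^\mp_{\mathcal Q}(W)$. Completion errors: $\mathfrak C^\pm_{\mathcal Q}(W)=\mathfrak R^\pm_{\rm CL}(W)-\mathfrak R^\pm_{\mathcal Q}(W)$. Active sets for $\epsilon>0$: $\mathfrak A^-(W)=\{Y\in\mathfrak J^-(W):\max\{-F(Y),0\}\ge\mathfrak R^-_{\rm CL}(W)-\epsilon\}$, $\mathfrak A^+(W)=\{Y\in\mathfrak J^+(W):\max\{F(Y),0\}\ge\mathfrak R^+_{\rm CL}(W)-\epsilon\}$. Coverage radii: $\mathfrak r^\pm_{\mathcal Q}(W)=\sup_{Y\in\mathfrak A^\pm(W)}\inf_{\hat Y\in\mathfrak S^\pm_{\mathcal Q}(W)}d(Y,\hat Y)$, with $\sup\emptyset=0$ and $\inf\emptyset=+\infty$. *)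

From HB Require Import structures.
From mathcomp Require Import all_boot all_order all_algebra.
From mathcomp Require Import all_classical all_reals all_analysis.
Set Implicit Arguments. Unset Strict Implicit. Unset Printing Implicit Defensive.
Import Order.TTheory GRing.Theory Num.Theory.
Import numFieldNormedType.Exports.
Local Open Scope classical_set_scope.
Local Open Scope ring_scope.

Section Defs.
Variable R : realType.
Variables n m : nat.

Definition dotv (u v : 'rV[R]_n) : R := \sum_(i < n) u ord0 i * v ord0 i.
Definition enorm (v : 'rV[R]_n) : R := Num.sqrt (dotv v v).
Definition frob (A : 'M[R]_n) : R := Num.sqrt (\sum_(i < n) \sum_(j < n) A i j ^+ 2).
Definition qform (A : 'M[R]_n) (v : 'rV[R]_n) : R := (v *m A *m v^T) ord0 ord0.

Definition symm_mx (A : 'M[R]_n) : Prop := A^T = A.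
Definition posdef (A : 'M[R]_n) : Prop :=
  symm_mx A /\ forall v : 'rV[R]_n, v != 0 -> 0 < qform A v.

(* jet data Y = (zeta, r, p, A), stored as nested pairs (((zeta, r), p), A) *)
Definition jet := ('rV[R]_n * R * 'rV[R]_n * 'M[R]_n)%type.
Definition jz (Y : jet) : 'rV[R]_n := Y.1.1.1.
Definition jr (Y : jet) : R := Y.1.1.2.
Definition jp (Y : jet) : 'rV[R]_n := Y.1.2.
Definition jA (Y : jet) : 'M[R]_n := Y.2.
Definition mkjet (z : 'rV[R]_n) (r : R) (p : 'rV[R]_n) (A : 'M[R]_n) : jet :=
  (z, r, p, A).

Definition jdist (Y Yh : jet) : R :=
  enorm (jz Y - jz Yh) + `|jr Y - jr Yh| + enorm (jp Y - jp Yh) + frob (jA Y - jA Yh).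

Definition Ham (beta : R) (f : 'rV[R]_n -> 'rV[R]_m -> 'rV[R]_n)
  (Sig : 'rV[R]_n -> 'rV[R]_m -> 'M[R]_n) (l : 'rV[R]_n -> 'rV[R]_m -> R)
  (U : set 'rV[R]_m) (Y : jet) : R :=
  beta * jr Y -
  inf [set l (jz Y) c + dotv (jp Y) (f (jz Y) c)
           + 2^-1 * \tr ((Sig (jz Y) c *m (Sig (jz Y) c)^T) *m jA Y) | c in U].

Definition subjet (W : 'rV[R]_n -> R) (z p : 'rV[R]_n) (A : 'M[R]_n) : Prop :=
  symm_mx A /\
  forall e : R, 0 < e -> exists2 d : R, 0 < d & forall y : 'rV[R]_n,
    enorm (y - z) < d ->
    W z + dotv p (y - z) + 2^-1 * qform A (y - z) - e * enorm (y - z) ^+ 2 <= W y.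
Definition superjet (W : 'rV[R]_n -> R) (z p : 'rV[R]_n) (A : 'M[R]_n) : Prop :=
  symm_mx A /\
  forall e : R, 0 < e -> exists2 d : R, 0 < d & forall y : 'rV[R]_n,
    enorm (y - z) < d ->
    W y <= W z + dotv p (y - z) + 2^-1 * qform A (y - z) + e * enorm (y - z) ^+ 2.

Definition Jminus (Om : set 'rV[R]_n) (Ups : set jet) (W : 'rV[R]_n -> R) : set jet :=
  [set Y | Ups Y /\ exists z p A, [/\ Om z, subjet W z p A & Y = mkjet z (W z) p A]].
Definition Jplus (Om : set 'rV[R]_n) (Ups : set jet) (W : 'rV[R]_n -> R) : set jet :=
  [set Y | Ups Y /\ exists z p A, [/\ Om z, superjet W z p A & Y = mkjet z (W z) p A]].

Definition Mapp (M : 'M[R]_n) (v : 'rV[R]_n) : 'rV[R]_n := (M *m v^T)^T.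

(* envelope families, built from fixed selections zsel (argmin) and zsel' (argmax) *)
Definition Sminus (Om : set 'rV[R]_n) (Ups : set jet) (W : 'rV[R]_n -> R)
  (Q : set ('rV[R]_n * 'M[R]_n)) (zsel : 'rV[R]_n -> 'M[R]_n -> 'rV[R]_n) : set jet :=
  [set Y | Ups Y /\ exists x M, [/\ Q (x, M), Om (zsel x M) &
       Y = mkjet (zsel x M) (W (zsel x M)) (Mapp M (x - zsel x M)) (- M)]].
Definition Splus (Om : set 'rV[R]_n) (Ups : set jet) (W : 'rV[R]_n -> R)
  (Q : set ('rV[R]_n * 'M[R]_n)) (zsel' : 'rV[R]_n -> 'M[R]_n -> 'rV[R]_n) : set jet :=
  [set Y | Ups Y /\ exists x M, [/\ Q (x, M), Om (zsel' x M) &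
       Y = mkjet (zsel' x M) (W (zsel' x M)) (- Mapp M (x - zsel' x M)) M]].

Local Open Scope ereal_scope.

(* sup over a family of nonnegative values with the convention sup(empty) = 0 *)
Definition sup0 (S : set (\bar R)) : \bar R := ereal_sup ([set 0] `|` S).

Definition resid_minus (Fh : jet -> R) (Fam : set jet) : \bar R :=
  sup0 [set (Num.max (- Fh Y) 0)%R%:E | Y in Fam].
Definition resid_plus (Fh : jet -> R) (Fam : set jet) : \bar R :=
  sup0 [set (Num.max (Fh Y) 0)%R%:E | Y in Fam].

Definition active_minus (Fh : jet -> R) (Fam : set jet) (eps : R) : set jet :=
  [set Y | Fam Y /\ resid_minus Fh Fam - eps%:E <= (Num.max (- Fh Y) 0)%R%:E].
Definition active_plus (Fh : jet -> R) (Fam : set jet) (eps : R) : set jet :=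
  [set Y | Fam Y /\ resid_plus Fh Fam - eps%:E <= (Num.max (Fh Y) 0)%R%:E].

(* coverage radius: sup_{Y in Act} inf_{Yh in Env} d(Y,Yh), sup empty = 0, inf empty = +oo *)
Definition coverage (Act Env : set jet) : \bar R :=
  sup0 [set ereal_inf [set (jdist Y Yh)%:E | Yh in Env] | Y in Act].

Definition ext_modulus (om : R -> R) (x : \bar R) : \bar R :=
  match x with
  | EFin r => (om r)%:E
  | +oo => +oo
  | -oo => -oo
  end.

End Defs.

From Pilot Require Import Defs.
From HB Require Import structures.
From mathcomp Require Import all_boot all_order all_algebra.
From mathcomp Require Import all_classical all_reals all_analysis.
From mathcomp Require Import lra.
Import Order.TTheory GRing.Theory Num.Theory.
Import numFieldNormedType.Exports.
Set Implicit Arguments. Unset Strict Implicit. Unset Printing Implicit Defensive.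
Local Open Scope classical_set_scope.
Local Open Scope ring_scope.

(* Fix an active classical jet Y, whose residual is within eps of the classical
   residual.  For every envelope jet Yh, residual(Y) - residual(Yh) <= omega_F(d(Y, Yh)),
   and residual(Yh) is at most the envelope residual; letting Yh run through
   near-minimisers of d(Y, .) and using monotonicity and right-continuity of omega_F
   gives residual(Y) - envelope residual <= omega_F(coverage radius).  The classical
   residual is finite because F is bounded on the compact tube: jdist is controlled
   by the product norm, which is bounded there. *)

Section JetNorms.
Variables (R : realType) (n : nat).

Lemma normr_mx_entry p q (A : 'M[R]_(p, q)) i j : `|A i j| <= `|A|.
Proof.
rewrite [`|A|]mx_normrE.
exact: (le_bigmax _ (fun ij : 'I_p * 'I_q => `|A ij.1 ij.2|) (i, j)).
Qed.

Lemma sqr_mx_entry_le p q (A : 'M[R]_(p, q)) i j : A i j ^+ 2 <= `|A| ^+ 2.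
Proof. by rewrite -real_normK ?num_real // ler_sqr ?nnegrE ?normr_mx_entry. Qed.

Lemma enorm_le_norm (v : 'rV[R]_n) : enorm v <= Num.sqrt n%:R * `|v|.
Proof.
have -> : `|v| = Num.sqrt (`|v| ^+ 2) by rewrite sqrtr_sqr normr_id.
rewrite -sqrtrM // ler_sqrt ?mulr_ge0 //.
apply: le_trans (ler_sum _ (fun i _ => sqr_mx_entry_le v ord0 i)) _.
by rewrite sumr_const card_ord mulr_natl.
Qed.

Lemma frob_le_norm (A : 'M[R]_n) : frob A <= n%:R * `|A|.
Proof.
have -> : n%:R * `|A| = Num.sqrt (n%:R * (n%:R * `|A| ^+ 2)).
  by rewrite mulrA -expr2 -exprMn sqrtr_sqr normrM normr_nat normr_id.
rewrite ler_sqrt ?mulr_ge0 //.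
apply: le_trans (ler_sum _ (fun i _ => ler_sum _ (fun j _ => sqr_mx_entry_le A i j))) _.
by rewrite !sumr_const card_ord !mulr_natl.
Qed.

Lemma normr_fst_le (U V : normedZmodType R) (x : U * V) : `|x.1| <= `|x|.
Proof. by rewrite prod_normE le_max lexx. Qed.

Lemma normr_snd_le (U V : normedZmodType R) (x : U * V) : `|x.2| <= `|x|.
Proof. by rewrite prod_normE le_max lexx orbT. Qed.

Definition jdist_lipschitz : R := 2 * Num.sqrt n%:R + 1 + n%:R.

Lemma jdist_le_norm (Y Yh : jet R n) : jdist Y Yh <= jdist_lipschitz * `|Y - Yh|.
Proof.
set D := Y - Yh.
have Dz : `|jz D| <= `|D|.
  by do 3 apply: le_trans (normr_fst_le _) _.
have Dr : `|jr D| <= `|D|.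
  by apply: le_trans (normr_snd_le _) _; do 2 apply: le_trans (normr_fst_le _) _.
have Dp : `|jp D| <= `|D|.
  by apply: le_trans (normr_snd_le _) _; apply: le_trans (normr_fst_le _) _.
have DA : `|jA D| <= `|D| by apply: normr_snd_le.
have sqrt_n_ge0 : 0 <= Num.sqrt n%:R :> R by [].
have n_ge0 : 0 <= n%:R :> R by [].
have := enorm_le_norm (jz D); have := enorm_le_norm (jp D); have := frob_le_norm (jA D).
rewrite /jdist_lipschitz /jdist.
nra.
Qed.

Lemma jdist_ge0 (Y Yh : jet R n) : 0 <= jdist Y Yh.
Proof. by rewrite /jdist /enorm /frob !addr_ge0 ?sqrtr_ge0. Qed.

End JetNorms.

Lemma bounded_on_compact_of_modulus (R : realType) n (F : jet R n -> R) (om : R -> R)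
    (S : set (jet R n)) :
  compact S ->
  (forall r s, 0 <= r -> r <= s -> om r <= om s) ->
  (forall Y Yh, S Y -> S Yh -> `|F Y - F Yh| <= om (jdist Y Yh)) ->
  exists B, forall Y, S Y -> `|F Y| <= B.
Proof.
move=> cS om_nd F_om.
have [[Y0 SY0]|S0] := pselect (S !=set0); last first.
  by exists 0 => Y SY; case: S0; exists Y.
have [M _ SM] := pinfty_ex_gt0 (compact_bounded cS).
exists (`|F Y0| + om (jdist_lipschitz R n * (M + M))) => Y SY.
have dY : jdist Y Y0 <= jdist_lipschitz R n * (M + M).
  apply: le_trans (jdist_le_norm Y Y0) _; apply: ler_wpM2l.
    by rewrite /jdist_lipschitz !addr_ge0 ?mulr_ge0.
  exact: le_trans (ler_normB _ _) (lerD (SM _ SY) (SM _ SY0)).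
have := om_nd _ _ (jdist_ge0 Y Y0) dY; have := F_om Y Y0 SY SY0.
have := ler_normD (F Y - F Y0) (F Y0); rewrite subrK.
lra.
Qed.

Section ResidualGap.
Variable R : realType.
Local Open Scope ereal_scope.

Lemma sup0_ge0 (S : set \bar R) : 0 <= Defs.sup0 S.
Proof. by apply: ereal_sup_ubound; left. Qed.

Lemma sup0_ub (S : set \bar R) x : S x -> x <= Defs.sup0 S.
Proof. by move=> Sx; apply: ereal_sup_ubound; right. Qed.

Lemma sup0_gt (S : set \bar R) x : x < Defs.sup0 S -> x < 0 \/ exists2 y, S y & x < y.
Proof. by move=> /ereal_sup_gt[y [->|Sy] xy]; [left | right; exists y]. Qed.

Variable om : R -> R.
Hypothesis om_ge0 : forall r, (0 <= r)%R -> (0 <= om r)%R.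
Hypothesis om_nd : forall r s, (0 <= r)%R -> (r <= s)%R -> (om r <= om s)%R.
Hypothesis om_rc : forall r, (0 <= r)%R -> om x @[x --> r^'+] --> om r.

Lemma le_modulus_einf (T : Type) (h : T -> R) (E : set T) (a r : R) :
  (0 <= r)%R -> (forall Y, E Y -> 0 <= h Y)%R ->
  (forall Y, E Y -> a <= om (h Y))%R ->
  ereal_inf [set (h Y)%:E | Y in E] <= r%:E -> (a <= om r)%R.
Proof.
move=> r0 h0 a_om infr.
have a_om_right : forall t, (r < t)%R -> (a <= om t)%R.
  move=> t rt; have /ereal_inf_lt[_ [Y EY <-]] : ereal_inf [set (h Y)%:E | Y in E] < t%:E.
    by apply: le_lt_trans infr _; rewrite lte_fin.
  by rewrite lte_fin => /ltW hYt; apply: le_trans (a_om Y EY) (om_nd (h0 Y EY) hYt).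
apply: cvgr_to_ge (om_rc r0) _.
exact: filterS a_om_right (nbhs_right_gt r).
Qed.

Variables (T : Type) (g : T -> R) (d : T -> T -> R).
Hypothesis d_ge0 : forall Y Yh, (0 <= d Y Yh)%R.

Local Notation supg A := (Defs.sup0 [set (g Y)%:E | Y in A]).

Lemma sup0_gap_le_modulus (Fam Env : set T) (eps B : R) : (0 < eps)%R ->
  (forall Y, Fam Y -> g Y <= B)%R ->
  (forall Y Yh, Fam Y -> Env Yh -> g Y - g Yh <= om (d Y Yh))%R ->
  supg Fam - supg Env <=
  ext_modulus om (Defs.sup0 [set ereal_inf [set (d Y Yh)%:E | Yh in Env] | Y in
      [set Y | Fam Y /\ supg Fam - eps%:E <= (g Y)%:E]]) + eps%:E.
Proof.
move=> eps0 gB g_om.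
have [c Rc] : exists c, supg Fam = c%:E.
  have : supg Fam \is a fin_num.
    rewrite ge0_fin_numE ?sup0_ge0 // (@le_lt_trans _ _ (Num.max B 0)%:E) ?ltry //.
    by apply: ge_ereal_sup => _ [->|[Y FY <-]]; rewrite lee_fin le_max ?lexx ?gB ?orbT.
  by move/fineK => <-; exists (fine (supg Fam)).
rewrite Rc; set cov := Defs.sup0 [set ereal_inf _ | Y in _].
have cov0 : 0 <= cov by apply: sup0_ge0.
have inf_le_cov Y : Fam Y -> (c - eps <= g Y)%R ->
    ereal_inf [set (d Y Yh)%:E | Yh in Env] <= cov.
  by move=> FY cY; apply: sup0_ub; exists Y => //; rewrite -EFinB lee_fin.
clearbody cov.
have Rq0 : 0 <= supg Env by apply: sup0_ge0.
have g_Rq Yh : Env Yh -> (g Yh)%:E <= supg Env by move=> EYh; apply: sup0_ub; exists Yh.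
move: Rq0 g_Rq; case: (supg Env) => [q||] // q0 g_q; last by rewrite addeNy leNye.
move: cov0 inf_le_cov; case: cov => [r||] // r0 inf_le_r; last by rewrite addye ?leey.
rewrite lee_fin in q0 r0; rewrite -EFinB -EFinD lee_fin.
have omr0 := om_ge0 r0.
have [c_eps|eps_c] := ltP c eps; first lra.
have c_eps_lt : (c - eps)%:E < supg Fam by rewrite Rc lte_fin; lra.
have [|[_ [Y FY <-]] Y_gt] := sup0_gt c_eps_lt; first by rewrite lte_fin; lra.
rewrite lte_fin in Y_gt.
suff : (g Y - q <= om r)%R by lra.
apply: (le_modulus_einf r0 (fun Yh _ => d_ge0 Y Yh)).
  move=> Yh EYh; have := g_q Yh EYh; rewrite lee_fin.
  have := g_om Y Yh FY EYh; lra.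
exact: inf_le_r Y FY (ltW Y_gt).
Qed.

End ResidualGap.

Lemma ler_max0_dist (R : realType) (a b : R) : Num.max a 0 - Num.max b 0 <= `|a - b|.
Proof.
have := ler_norm (a - b); have := ler_norm (b - a); rewrite distrC.
by case: (leP a 0) => a0; case: (leP b 0) => b0; lra.
Qed.

Theorem propositionC1 (R : realType) (n m : nat)
  (Om : set 'rV[R]_n) (U : set 'rV[R]_m) (beta : R)
  (f : 'rV[R]_n -> 'rV[R]_m -> 'rV[R]_n) (Sig : 'rV[R]_n -> 'rV[R]_m -> 'M[R]_n)
  (l : 'rV[R]_n -> 'rV[R]_m -> R)
  (W : 'rV[R]_n -> R) (Ups : set (jet R n)) (om : R -> R)
  (Q : set ('rV[R]_n * 'M[R]_n))
  (zsel zsel' : 'rV[R]_n -> 'M[R]_n -> 'rV[R]_n) (eps : R) :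
  open Om -> bounded_set Om ->
  compact U -> U !=set0 -> 0 <= beta ->
  {within closure Om `*` U, continuous (fun xc => f xc.1 xc.2)} ->
  {within closure Om `*` U, continuous (fun xc => Sig xc.1 xc.2)} ->
  {within closure Om `*` U, continuous (fun xc => l xc.1 xc.2)} ->
  {within closure Om, continuous W} ->
  compact Ups ->
  (forall Y, Ups Y -> [/\ closure Om (jz Y) & symm_mx (jA Y)]) ->
  (* omega_F : nonnegative, nondecreasing, right-continuous modulus on [0,oo) *)
  (forall r, 0 <= r -> 0 <= om r) ->
  (forall r s, 0 <= r -> r <= s -> om r <= om s) ->
  (forall r, 0 <= r -> om x @[x --> r^'+] --> om r) ->
  (forall Y Yh, Ups Y -> Ups Yh ->
     `|Ham beta f Sig l U Y - Ham beta f Sig l U Yh| <= om (jdist Y Yh)) ->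
  (* Q subset of closure(Om) x S_++(n) *)
  (forall x M, Q (x, M) -> closure Om x /\ posdef M) ->
  (* fixed argmin / argmax selections *)
  (forall x M, Q (x, M) ->
     closure Om (zsel x M) /\
     forall z, closure Om z ->
       W (zsel x M) + 2^-1 * qform M (x - zsel x M) <= W z + 2^-1 * qform M (x - z)) ->
  (forall x M, Q (x, M) ->
     closure Om (zsel' x M) /\
     forall z, closure Om z ->
       W z - 2^-1 * qform M (x - z) <= W (zsel' x M) - 2^-1 * qform M (x - zsel' x M)) ->
  0 < eps ->
  let Fh := Ham beta f Sig l U in
  let Jm := Jminus Om Ups W in
  let Jp := Jplus Om Ups W in
  let Sm := Sminus Om Ups W Q zsel in
  let Sp := Splus Om Ups W Q zsel' in
  ((resid_minus Fh Jm - resid_minus Fh Sm)%E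
     <= (ext_modulus om (coverage (active_minus Fh Jm eps) Sm) + eps%:E)%E)%E /\
  ((resid_plus Fh Jp - resid_plus Fh Sp)%E
     <= (ext_modulus om (coverage (active_plus Fh Jp eps) Sp) + eps%:E)%E)%E.
Proof.
move=> _ _ _ _ _ _ _ _ _ cUps _ om_ge0 om_nd om_rc F_om _ _ _ eps_gt0.
move=> Fh Jm Jp Sm Sp.
have [B FB] := bounded_on_compact_of_modulus cUps om_nd F_om.
have max0_le_bound x Y : Ups Y -> `|x| <= `|Fh Y| -> Num.max x 0 <= B.
  move=> UY x_Y; have := FB Y UY; rewrite ge_max => FYB.
  by rewrite (le_trans (ler_norm x) (le_trans x_Y FYB)) (le_trans _ FYB).
split; apply: (sup0_gap_le_modulus om_ge0 om_nd om_rc (@jdist_ge0 R n) (B := B) eps_gt0).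
- by move=> Y [UY _]; apply: max0_le_bound UY _; rewrite normrN.
- move=> Y Yh [UY _] [UYh _]; apply: le_trans (ler_max0_dist _ _) _.
  by rewrite -opprD normrN; apply: F_om.
- by move=> Y [UY _]; apply: max0_le_bound UY _.
- move=> Y Yh [UY _] [UYh _]; apply: le_trans (ler_max0_dist _ _) _.
  exact: F_om.
Qed.
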